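(* Let $p$ be a prime with $p\neq 3$, and let $C(x,y,z)=ax^3+by^3+cz^3$ with $a,b,c$ integers such that $p\nmid abc$. Then $R(C)$ is dense in $\mathbb{Q}_p$.
   Context: For an integral form $F$ in $r$ variables, $R(F)=\{F(\overline{x})/F(\overline{y}):\overline{x},\overline{y}\in\mathbb{Z}^r,\ F(\overline{y})\neq 0\}$, viewed as a subset of the field $\mathbb{Q}_p$ of $p$-adic numbers with its $p$-adic topology. *)

From mathcomp Require Import all_boot all_order all_algebra.
Set Implicit Arguments. Unset Strict Implicit. Unset Printing Implicit Defensive.
Import Order.TTheory GRing.Theory Num.Theory.
Local Open Scope ring_scope.

Definition padic_val (p : nat) (x : rat) : int :=
  (logn p `|numq x|%N)%:Z - (logn p `|denq x|%N)%:Z.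

Definition padic_abs (p : nat) (x : rat) : rat :=
  if x == 0 then 0 else (p%:R : rat) ^ (- padic_val p x).

Definition diag_cubic (a b c : int) (x y z : int) : int :=
  a * x ^+ 3 + b * y ^+ 3 + c * z ^+ 3.

Definition ratio_set (F : int -> int -> int -> int) (r : rat) : Prop :=
  exists x1 x2 x3 y1 y2 y3 : int,
    F y1 y2 y3 != 0 /\ r = (F x1 x2 x3)%:~R / (F y1 y2 y3)%:~R.

(* S subset of Q is dense in Q_p.  Since Q is dense in Q_p, this is
   equivalent to: every rational is a p-adic limit of elements of S. *)
Definition dense_in_Qp (p : nat) (S : rat -> Prop) : Prop :=
  forall (q eps : rat), 0 < eps -> exists r, S r /\ padic_abs p (r - q) < eps.

(* Modulo p the form represents every residue N by a vector with a coordinate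
   prime to p.  For p = 2 mod 3 every residue is a cube.  For p = 1 mod 3 the
   cubic residue classes of F_p^* are reached one at a time: adding multiples
   of a nonzero coefficient runs through all of F_p, so it leaves any proper
   subset containing 0, landing in a new class; N = 0 needs a t of class 1
   with 1 + t of class 2, which exists by comparing class sizes.  Hensel's
   lemma in the coordinate prime to p lifts this to every modulus p^M.
   Taking N = a * num(q) * den(q)^2 over C(den q, 0, 0) = a * den(q)^3 then
   gives elements of R(C) whose p-adic distance to q is at most
   p^(3 v_p(den q) - M). *)
From mathcomp Require Import all_boot all_order all_algebra cyclic finfield.
From mathcomp Require Import zify ring.
Set Implicit Arguments. Unset Strict Implicit. Unset Printing Implicit Defensive.
Import Order.TTheory GRing.Theory Num.Theory.
Local Open Scope ring_scope.

Section PrimeField.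

Variable p : nat.
Hypothesis p_pr : prime p.

Lemma Fp_expp (x : 'F_p) : x ^+ p = x.
Proof. by have := expf_card x; rewrite card_Fp. Qed.

Lemma Fp_expp1 (x : 'F_p) : x != 0 -> x ^+ p.-1 = 1.
Proof.
move=> x0; apply: (mulfI x0); rewrite mulr1 -exprS prednK ?prime_gt0 //.
exact: Fp_expp.
Qed.

Lemma Fp_prim_root : exists g : 'F_p, p.-1.-primitive_root g.
Proof.
have p1_gt0 : (0 < p.-1)%N by rewrite -subn1 subn_gt0 prime_gt1.
have [||| g _] := hasP (@has_prim_root _ _ (enum (predC1 (0 : 'F_p))) p1_gt0 _ _ _).
- by apply/allP => x; rewrite mem_enum unity_rootE => /Fp_expp1 ->.
- exact: enum_uniq.
- by rewrite -cardE cardC1 card_Fp.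
by exists g.
Qed.

Lemma Fp_cube_onto : (p %% 3 = 2)%N -> forall w : 'F_p, exists x, w = x ^+ 3.
Proof.
move=> p_mod3 w; have dvd3 : (3 %| p + p.-1)%N.
  by move: p_mod3; case: (p) p_pr => // q _ /=; rewrite /dvdn => ?; apply/eqP; lia.
exists (w ^+ ((p + p.-1) %/ 3)); rewrite -exprM divnK // exprD Fp_expp //.
by rewrite -exprS prednK ?prime_gt0 // Fp_expp.
Qed.

(* Stepping by [d] from [0] visits every element of ['F_p], so it must leave [T]. *)
Lemma Fp_walk_exit (T : {pred 'F_p}) (d w : 'F_p) :
  0 \in T -> w \notin T -> d != 0 -> exists2 t, t \in T & t + d \notin T.
Proof.
move=> T0 Tw d0.
have [t /andP[Tt Ttd] | stay] := pickP [pred t | (t \in T) && (t + d \notin T)].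
  by exists t.
have Tmd (m : nat) : m%:R * d \in T.
  elim: m => [|m IH]; first by rewrite mul0r.
  by have := stay (m%:R * d); rewrite /= IH mulrSr mulrDl mul1r => /negbFE.
by move: (Tmd (w / d : 'F_p)); rewrite natr_Zp divfK // (negbTE Tw).
Qed.

End PrimeField.

Definition diag_rep (R : pzRingType) (a b c v : R) :=
  exists x y z, a * x ^+ 3 + b * y ^+ 3 + c * z ^+ 3 = v.

Section DiagRep.

Variables (R : comPzRingType) (a b c : R).

Lemma diag_rep_coef : diag_rep a b c a.
Proof. by exists 1, 0, 0; ring. Qed.

Lemma diag_rep_scale v y : diag_rep a b c v -> diag_rep a b c (y ^+ 3 * v).
Proof. by case=> x [u [z <-]]; exists (y * x), (y * u), (y * z); ring. Qed.

Lemma diag_rep_extend v : diag_rep a b 0 v -> diag_rep a b c v.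
Proof. by case=> x [y [z <-]]; exists x, y, 0; ring. Qed.

Lemma diag_rep_shift v : diag_rep a b 0 v -> diag_rep a b c (v + c).
Proof. by case=> x [y [z <-]]; exists x, y, 1; ring. Qed.

End DiagRep.

Section CubicClasses.

Variables (p : nat) (g : 'F_p).
Hypotheses (p_pr : prime p) (p_mod3 : (p %% 3 = 1)%N).
Hypothesis g_prim : p.-1.-primitive_root g.

(* [dlog 0] is the junk value [0], hence so is [cls 0]. *)
Definition dlog (x : 'F_p) : nat := oapp val 0%N [pick i : 'I_p.-1 | g ^+ i == x].

Definition cls (x : 'F_p) : nat := (dlog x %% 3)%N.

Lemma dlogK x : x != 0 -> g ^+ dlog x = x.
Proof.
move=> x0; rewrite /dlog; case: pickP => [i /eqP //|none].
have [i gi] := prim_rootP g_prim (Fp_expp1 p_pr x0).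
by have := none i; rewrite gi eqxx.
Qed.

Lemma g_neq0 : g != 0.
Proof.
apply/eqP => g0; have := prim_expr_order g_prim.
by rewrite g0 expr0n gtn_eqF ?(prim_order_gt0 g_prim).
Qed.

Lemma cls_exp i : cls (g ^+ i) = (i %% 3)%N.
Proof.
have dvd3 : (3 %| p.-1)%N.
  by move: p_mod3; case: (p) => // q /=; rewrite /dvdn => ?; apply/eqP; lia.
have /eqP := dlogK (expf_neq0 i g_neq0).
by rewrite (eq_prim_root_expr g_prim) => /eqP/(congr1 (modn^~ 3%N)); rewrite !modn_dvdm.
Qed.

Lemma cls_lt3 x : (cls x < 3)%N.
Proof. exact: ltn_pmod. Qed.

Lemma cls_g : cls g = 1%N.
Proof. by rewrite -(expr1 g) cls_exp. Qed.

Lemma clsM x y : x != 0 -> y != 0 -> cls (x * y) = ((cls x + cls y) %% 3)%N.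
Proof.
by move=> x0 y0; rewrite -{1}(dlogK x0) -{1}(dlogK y0) -exprD cls_exp modnDm.
Qed.

Lemma cls_cube y : y != 0 -> cls (y ^+ 3) = 0%N.
Proof. by move=> y0; rewrite -(dlogK y0) -exprM cls_exp modnMl. Qed.

Lemma cls1 : cls 1 = 0%N.
Proof. by rewrite -(expr1n _ 3) cls_cube ?oner_neq0. Qed.

Lemma clsN1 : cls (-1) = 0%N.
Proof.
have -> : -1 = (-1) ^+ 3 :> 'F_p by rewrite -signr_odd.
by rewrite cls_cube // oppr_eq0 oner_neq0.
Qed.

Lemma clsN x : x != 0 -> cls (- x) = cls x.
Proof.
by move=> x0; rewrite -mulN1r clsM ?oppr_eq0 ?oner_neq0 // clsN1 modn_mod.
Qed.

Lemma clsV x : x != 0 -> cls x^-1 = ((3 - cls x) %% 3)%N.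
Proof.
move=> x0; have := clsM x0 (invr_neq0 x0); rewrite mulfV // cls1.
by have := cls_lt3 x; have := cls_lt3 x^-1; lia.
Qed.

Lemma eq_cls_cube u v : u != 0 -> v != 0 -> cls u = cls v -> exists y, u = y ^+ 3 * v.
Proof.
move=> u0 v0 uv; have uv0 : u / v != 0 by rewrite mulf_neq0 ?invr_neq0.
have dvd3 : (3 %| dlog (u / v))%N.
  by rewrite /dvdn -/(cls _) clsM ?invr_neq0 // clsV // uv; have := cls_lt3 v; lia.
by exists (g ^+ (dlog (u / v) %/ 3)); rewrite -exprM divnK // dlogK // divfK.
Qed.

Lemma diag_rep_cls (a b c v N : 'F_p) :
  diag_rep a b c v -> v != 0 -> N != 0 -> cls N = cls v -> diag_rep a b c N.
Proof. by move=> rep_v v0 N0 /(eq_cls_cube N0 v0) [y ->]; apply: diag_rep_scale. Qed.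

Lemma binary_new_class (a b : 'F_p) : a != 0 -> b != 0 ->
  exists s, [/\ diag_rep a b 0 s, s != 0 & cls s != cls a].
Proof.
move=> a0 b0; pose T := [pred v | [exists x, v == a * x ^+ 3]].
have T0 : 0 \in T by apply/existsP; exists 0; rewrite expr0n mulr0.
have [|t] := Fp_walk_exit (T := T) (w := a * g) T0 _ b0.
  apply/existsP => -[x /eqP /(mulfI a0) gx].
  have x0 : x != 0 by apply: contraNneq g_neq0; rewrite gx => ->; rewrite expr0n.
  by have := cls_cube x0; rewrite -gx cls_g.
move=> /existsP [x /eqP ->] T_s; set s := _ + b in T_s.
have s0 : s != 0 by apply: contraNneq T_s => ->.
exists s; split=> //; first by exists x, 1, 0; rewrite /s; ring.
apply: contraNneq T_s => /(eq_cls_cube s0 a0) [y ->].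
by apply/existsP; exists y; rewrite mulrC.
Qed.

Lemma ternary_new_class (a b c s : 'F_p) : a != 0 -> c != 0 ->
  diag_rep a b 0 s -> s != 0 -> cls s != cls a ->
  exists s', [/\ diag_rep a b c s', s' != 0, cls s' != cls a & cls s' != cls s].
Proof.
move=> a0 c0 rep_s s0 sa.
pose T := [pred v | (v == 0) || (cls v == cls a) || (cls v == cls s)].
have [||t T_t T_t'] := Fp_walk_exit (T := T) (w := g ^+ (3 - (cls a + cls s))) _ _ c0.
- by rewrite inE eqxx.
- rewrite !inE expf_eq0 (negbTE g_neq0) andbF cls_exp /=.
  by move: sa; have := cls_lt3 a; have := cls_lt3 s; lia.
exists (t + c); split.
- apply: diag_rep_shift; have [-> | t0] := eqVneq t 0; first by exists 0, 0, 0; ring.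
  move: T_t; rewrite !inE (negbTE t0) => /orP[] /eqP cls_t.
  + exact: diag_rep_cls (diag_rep_coef _ _ _) a0 t0 cls_t.
  + exact: diag_rep_cls rep_s s0 t0 cls_t.
- by apply: contraNneq T_t' => ->; rewrite !inE eqxx.
- by apply: contraNneq T_t' => cls_eq; rewrite !inE cls_eq eqxx orbT.
- by apply: contraNneq T_t' => cls_eq; rewrite !inE cls_eq eqxx !orbT.
Qed.

Lemma diag_rep_nonzero (a b c N : 'F_p) :
  a != 0 -> b != 0 -> c != 0 -> N != 0 -> diag_rep a b c N.
Proof.
move=> a0 b0 c0 N0; have [s [rep_s s0 sa]] := binary_new_class a0 b0.
have [s' [rep_s' s'0 s'a s's]] := ternary_new_class a0 c0 rep_s s0 sa.
have : [|| cls N == cls a, cls N == cls s | cls N == cls s'].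
  by move: sa s'a s's; have := cls_lt3 N; have := cls_lt3 a; have := cls_lt3 s;
     have := cls_lt3 s'; lia.
case/or3P=> /eqP cls_N; apply: diag_rep_cls cls_N => //.
- exact: diag_rep_coef.
- exact: diag_rep_extend.
Qed.

Definition cube_coset k := [set x : 'F_p | (x != 0) && (cls x == k)].

Lemma card_cube_coset01 : (#|cube_coset 0%N| <= #|cube_coset 1%N|)%N.
Proof.
rewrite -(card_imset (cube_coset 0%N) (mulfI g_neq0)) subset_leq_card //.
apply/subsetP => _ /imsetP[x /[!inE] /andP[x0 /eqP cx] ->].
by rewrite mulf_neq0 ?g_neq0 //= clsM ?g_neq0 // cls_g cx.
Qed.

(* Otherwise [phi] would inject [cube_coset 1] into [cube_coset 0 :\ -1],
   contradicting [card_cube_coset01]. *)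
Lemma cls_shift12 : exists t, [/\ t != 0, cls t = 1%N & cls (1 + t) = 2%N].
Proof.
have [t /andP[/andP[t0 /eqP ct] /eqP c1t] | none] :=
  pickP [pred t | (t != 0) && (cls t == 1%N) && (cls (1 + t) == 2%N)].
  by exists t.
have C1P t : t \in cube_coset 1%N ->
    [/\ t != 0, 1 + t != 0, cls t = 1%N & cls (1 + t) != 2%N].
  rewrite inE => /andP[t0 /eqP ct]; split=> //.
    by rewrite addrC addr_eq0; apply/eqP => t_N1; move: ct; rewrite t_N1 clsN1.
  by have := none t; rewrite /= t0 ct => /negbT.
pose phi t := if cls (1 + t) == 0%N then -1 - t else -1 - t^-1.
have phiC : {in cube_coset 1%N, forall t, phi t \in cube_coset 0%N :\ -1}.
  move=> t /C1P[t0 t10 ct c1t]; rewrite /phi; case: ifP => [/eqP c0 | /negbT c0].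
    rewrite !inE -opprD oppr_eq0 t10 clsN // c0 eqr_opp.
    by rewrite -{2}(addr0 1) (inj_eq (addrI 1)) t0.
  have c1 : cls (1 + t) = 1%N by move: c0 c1t; have := cls_lt3 (1 + t); set k := cls _; lia.
  have -> : -1 - t^-1 = - ((1 + t) * t^-1) by rewrite mulrDl mulfV // mul1r opprD addrC.
  rewrite !inE oppr_eq0 mulf_neq0 ?invr_neq0 //= clsN ?mulf_neq0 ?invr_neq0 //.
  rewrite clsM ?invr_neq0 // clsV // ct c1 /= andbT eqr_opp -{2}(mulfV t0).
  by rewrite (inj_eq (mulIf (invr_neq0 t0))) -{2}(add0r t) (inj_eq (addIr t)) oner_neq0.
have phi_inj : {in cube_coset 1%N &, injective phi}.
  move=> t1 t2 /C1P[t10 _ c1 _] /C1P[t20 _ c2 _]; rewrite /phi.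
  case: ifP => _; case: ifP => _ /(addrI (-1))/oppr_inj; first by [].
  - by move=> e; move: c1; rewrite e clsV // c2.
  - by move=> e; move: c2; rewrite -e clsV // c1.
  - exact: invr_inj.
have : (#|cube_coset 1%N| <= #|cube_coset 0%N :\ (-1)%R|)%N.
  rewrite -(card_in_imset phi_inj) subset_leq_card //.
  by apply/subsetP => _ /imsetP[t /phiC ? ->].
have := card_cube_coset01; rewrite (cardsD1 (-1)%R) !inE oppr_eq0 oner_neq0 clsN1 /=.
by move=> /leq_trans le_C01 /le_C01; rewrite ltnn.
Qed.

Lemma cls_cancel u v : u != 0 -> v != 0 -> cls u = cls v -> exists x, u * x ^+ 3 + v = 0.
Proof.
move=> u0 v0 cls_uv; have Nv0 : - v != 0 by rewrite oppr_eq0.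
have [|x Nv_eq] := eq_cls_cube Nv0 u0; first by rewrite clsN.
by exists x; rewrite mulrC -Nv_eq addNr.
Qed.

(* With [t] from [cls_shift12], [u y^3 = t a] and [v z^3 = - (1 + t) a]. *)
Lemma distinct_cls_isotropic (a u v : 'F_p) : a != 0 -> u != 0 -> v != 0 ->
    cls u = ((cls a + 1) %% 3)%N -> cls v = ((cls a + 2) %% 3)%N ->
  exists y z, a + u * y ^+ 3 + v * z ^+ 3 = 0.
Proof.
move=> a0 u0 v0 cu cv; have [t [t0 ct c1t]] := cls_shift12.
have t10 : 1 + t != 0.
  by rewrite addrC addr_eq0; apply/eqP => t_N1; move: ct; rewrite t_N1 clsN1.
have Nt1a0 : - ((1 + t) * a) != 0 by rewrite oppr_eq0 mulf_neq0.
have [|y ta_eq] := eq_cls_cube (mulf_neq0 t0 a0) u0; first by rewrite clsM // ct addnC cu.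
have [|z t1a_eq] := eq_cls_cube Nt1a0 v0.
  by rewrite clsN ?mulf_neq0 // clsM // c1t addnC cv.
by exists y, z; rewrite mulrC [v * _]mulrC -ta_eq -t1a_eq; ring.
Qed.

Lemma diag_cubic_isotropic (a b c : 'F_p) : a != 0 -> b != 0 -> c != 0 ->
  exists x y z, a * x ^+ 3 + b * y ^+ 3 + c * z ^+ 3 = 0 /\ [\/ x != 0, y != 0 | z != 0].
Proof.
move=> a0 b0 c0; have one0 : (1 : 'F_p) != 0 := oner_neq0 _.
have [ab | nab] := eqVneq (cls a) (cls b).
  have [x xab] := cls_cancel a0 b0 ab; exists x, 1, 0; split; last exact: Or32.
  by rewrite -[RHS]xab; ring.
have [ac | nac] := eqVneq (cls a) (cls c).
  have [x xac] := cls_cancel a0 c0 ac; exists x, 0, 1; split; last exact: Or33.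
  by rewrite -[RHS]xac; ring.
have [bc | nbc] := eqVneq (cls b) (cls c).
  have [y ybc] := cls_cancel b0 c0 bc; exists 0, y, 1; split; last exact: Or33.
  by rewrite -[RHS]ybc; ring.
move: (cls_lt3 a) (cls_lt3 b) (cls_lt3 c) => a_lt3 b_lt3 c_lt3.
have [cb | cb] : cls b = ((cls a + 1) %% 3)%N \/ cls b = ((cls a + 2) %% 3)%N by lia.
- have [|y [z abc]] := distinct_cls_isotropic a0 b0 c0 cb; first by lia.
  by exists 1, y, z; split; [rewrite -[RHS]abc; ring | exact: Or31].
- have [|z [y acb]] := distinct_cls_isotropic a0 c0 b0 _ cb; first by lia.
  by exists 1, y, z; split; [rewrite -[RHS]acb; ring | exact: Or31].
Qed.

End CubicClasses.

Lemma diag_cubic_nontrivial (R : pzRingType) (a b c x y z : R) :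
  a * x ^+ 3 + b * y ^+ 3 + c * z ^+ 3 != 0 -> [\/ x != 0, y != 0 | z != 0].
Proof.
have [->|] := eqVneq x 0; last by constructor 1.
have [->|] := eqVneq y 0; last by constructor 2.
have [->|] := eqVneq z 0; last by constructor 3.
by rewrite !expr0n !mulr0 !addr0 eqxx.
Qed.

Lemma Fp_diag_cubic_rep p (a b c N : 'F_p) : prime p -> p != 3%N ->
  a != 0 -> b != 0 -> c != 0 ->
  exists x y z, a * x ^+ 3 + b * y ^+ 3 + c * z ^+ 3 = N /\ [\/ x != 0, y != 0 | z != 0].
Proof.
move=> p_pr p_neq3 a0 b0 c0.
have /orP[/eqP p_mod3 | /eqP p_mod3] : ((p %% 3 == 1) || (p %% 3 == 2))%N.
  have : ~~ (3 %| p)%N by rewrite dvdn_prime2 // eq_sym.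
  by rewrite /dvdn; lia.
- have [g g_prim] := Fp_prim_root p_pr.
  have [-> | N0] := eqVneq N 0; first exact: (diag_cubic_isotropic p_pr p_mod3 g_prim).
  have [x [y [z rep_N]]] := diag_rep_nonzero p_pr p_mod3 g_prim a0 b0 c0 N0.
  exists x, y, z; split=> //.
  by apply: (diag_cubic_nontrivial (a := a) (b := b) (c := c)); rewrite rep_N.
have [x x_eq] := Fp_cube_onto p_pr p_mod3 ((N - b) / a).
exists x, 1, 0; split; last by apply: Or32; exact: oner_neq0.
by rewrite -x_eq mulrC divfK // expr1n expr0n !mulr0 mulr1 addr0 subrK.
Qed.

Lemma intr_diag_cubic (R : pzRingType) (a b c x y z : int) :
  (diag_cubic a b c x y z)%:~R =
  a%:~R * x%:~R ^+ 3 + b%:~R * y%:~R ^+ 3 + c%:~R * z%:~R ^+ 3 :> R.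
Proof. by rewrite /diag_cubic !intrD !intrM. Qed.

Lemma diag_cubic_swap12 (a b c x y z : int) :
  diag_cubic a b c x y z = diag_cubic b a c y x z.
Proof. by rewrite /diag_cubic; ring. Qed.

Lemma diag_cubic_swap13 (a b c x y z : int) :
  diag_cubic a b c x y z = diag_cubic c b a z y x.
Proof. by rewrite /diag_cubic; ring. Qed.

Section IntegerSolutions.

Variable p : nat.
Hypotheses (p_pr : prime p) (p_neq3 : p != 3%N).

Lemma dvdz_Fp (z : int) : (p%:Z %| z)%Z = (z%:~R == 0 :> 'F_p).
Proof. exact: dvdz_pcharf (pchar_Fp p_pr) z. Qed.

Lemma coprimez_prime (z : int) : coprimez p%:Z z = ~~ (p%:Z %| z)%Z.
Proof. by rewrite coprimezE dvdzE /= prime_coprime. Qed.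

Lemma ndvdz_mul3 (a b c : int) : ~~ (p%:Z %| a * b * c)%Z ->
  [/\ ~~ (p%:Z %| a), ~~ (p%:Z %| b) & ~~ (p%:Z %| c)]%Z.
Proof. by rewrite !dvdz_Fp !intrM !mulf_eq0 !negb_or => /andP[/andP[-> ->] ->]. Qed.

Lemma diag_cubic_mod_p (a b c N : int) :
  ~~ (p%:Z %| a)%Z -> ~~ (p%:Z %| b)%Z -> ~~ (p%:Z %| c)%Z ->
  exists x y z, (p%:Z %| diag_cubic a b c x y z - N)%Z /\
    [\/ ~~ (p%:Z %| x)%Z, ~~ (p%:Z %| y)%Z | ~~ (p%:Z %| z)%Z].
Proof.
rewrite !dvdz_Fp => a0 b0 c0.
have [x [y [z [rep_N nontriv]]]] := Fp_diag_cubic_rep (N%:~R) p_pr p_neq3 a0 b0 c0.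
exists (x : nat)%:Z, (y : nat)%:Z, (z : nat)%:Z; rewrite !dvdz_Fp -!pmulrn !natr_Zp.
by split=> //; rewrite intrB intr_diag_cubic -!pmulrn !natr_Zp rep_N subrr.
Qed.

Lemma cubic_hensel_step (A L x : int) (M : nat) :
  ~~ (p%:Z %| A)%Z -> ~~ (p%:Z %| x)%Z -> (p%:Z ^+ M.+1 %| A * x ^+ 3 + L)%Z ->
  exists s, (p%:Z ^+ M.+2 %| A * (x + p%:Z ^+ M.+1 * s) ^+ 3 + L)%Z.
Proof.
move=> pA px /dvdzP[m fx]; set P := p%:Z ^+ M.+1 in fx *.
have /eqP cop : coprimez p%:Z (3 * A * x ^+ 2).
  by rewrite !coprimezMr !coprimez_prime pA px !andbT dvdzE /= dvdn_prime2.
have [u [v bezout]] := Bezoutz p%:Z (3 * A * x ^+ 2); rewrite cop in bezout.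
exists (- m * v).
(* The first-order term [3 A x^2 P s] cancels [m P] up to a multiple of [P p]. *)
have -> : A * (x + P * (- m * v)) ^+ 3 + L =
    P * p%:Z * (m * u) + P * P * (A * (x * 3 + P * (- m * v)) * (m * v) ^+ 2).
  have -> : L = m * P - A * x ^+ 3 by rewrite -fx addrAC subrr add0r.
  by rewrite -[m * P]mulr1 -[X in m * P * X]bezout; ring.
rewrite rpredD // dvdz_mulr //; first by rewrite /P -exprSr.
by rewrite /P -exprD dvdz_exp2l //; lia.
Qed.

Lemma cubic_hensel (A L x0 : int) :
  ~~ (p%:Z %| A)%Z -> ~~ (p%:Z %| x0)%Z -> (p%:Z %| A * x0 ^+ 3 + L)%Z ->
  forall M, exists x, (p%:Z ^+ M %| A * x ^+ 3 + L)%Z.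
Proof.
move=> pA px0 fx0.
suff lift M : exists2 x, ~~ (p%:Z %| x)%Z & (p%:Z ^+ M.+1 %| A * x ^+ 3 + L)%Z.
  by move=> M; have [x _ fx] := lift M; exists x; apply: dvdz_trans fx; apply: dvdz_exp2l.
elim: M => [|M [x px fx]]; first by exists x0; rewrite ?expr1.
have [s fxs] := cubic_hensel_step pA px fx.
by exists (x + p%:Z ^+ M.+1 * s) => //; rewrite rpredDr // exprS -mulrA dvdz_mulr.
Qed.

Lemma diag_cubic_lift (a b c N x y z : int) :
  ~~ (p%:Z %| a)%Z -> ~~ (p%:Z %| x)%Z -> (p%:Z %| diag_cubic a b c x y z - N)%Z ->
  forall M, exists x', (p%:Z ^+ M %| diag_cubic a b c x' y z - N)%Z.
Proof.
move=> pa px fx M.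
have [|x' fx'] := cubic_hensel (L := b * y ^+ 3 + c * z ^+ 3 - N) pa px _ M.
  by move: fx; rewrite /diag_cubic !addrA.
by exists x'; move: fx'; rewrite /diag_cubic !addrA.
Qed.

Lemma diag_cubic_approx (a b c N : int) (M : nat) :
  ~~ (p%:Z %| a)%Z -> ~~ (p%:Z %| b)%Z -> ~~ (p%:Z %| c)%Z ->
  exists x y z, (p%:Z ^+ M %| diag_cubic a b c x y z - N)%Z.
Proof.
move=> pa pb pc; have [x [y [z [fxyz [px | py | pz]]]]] := diag_cubic_mod_p N pa pb pc.
- by have [x' ?] := diag_cubic_lift pa px fxyz M; exists x', y, z.
- rewrite diag_cubic_swap12 in fxyz.
  have [y' ?] := diag_cubic_lift pb py fxyz M; exists x, y', z.
  by rewrite diag_cubic_swap12.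
- rewrite diag_cubic_swap13 in fxyz.
  have [z' ?] := diag_cubic_lift pc pz fxyz M; exists x, y, z'.
  by rewrite diag_cubic_swap13.
Qed.

End IntegerSolutions.

Section PadicAbs.

Variable p : nat.
Hypothesis p_pr : prime p.

Lemma padic_val_frac (U V : int) : U != 0 -> V != 0 ->
  padic_val p (U%:~R / V%:~R) = (logn p `|U|)%:Z - (logn p `|V|)%:Z.
Proof.
move=> U0 V0; rewrite /padic_val; set x := U%:~R / V%:~R.
have cross : U * denq x = numq x * V.
  apply: (@intr_inj rat); rewrite !intrM; apply/eqP.
  by rewrite -eqr_div ?intr_eq0 ?denq_neq0 // divq_num_den.
have /(congr1 (logn p)) : `|(U * denq x)%R|%N = `|(numq x * V)%R|%N by rewrite cross.
have x0 : x != 0 by rewrite mulf_neq0 ?invr_eq0 ?intr_eq0.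
by rewrite !abszM !lognM ?absz_gt0 ?denq_neq0 ?numq_eq0 //; lia.
Qed.

Lemma padic_abs_frac_le (U V : int) (M : nat) : V != 0 -> (p%:Z ^+ M %| U)%Z ->
  padic_abs p (U%:~R / V%:~R) <= p%:R ^ ((logn p `|V|)%:Z - M%:Z).
Proof.
have p_gt1 : 1 < p%:R :> rat by rewrite ltr1n prime_gt1.
move=> V0 pM_U; have [-> | U0] := eqVneq U 0.
  by rewrite mul0r /padic_abs eqxx exprz_ge0 // ltW // (lt_trans ltr01).
have M_le : (M <= logn p `|U|)%N.
  by move: pM_U; rewrite dvdzE abszX /= pfactor_dvdn // absz_gt0.
rewrite /padic_abs mulf_eq0 invr_eq0 !intr_eq0 (negbTE U0) (negbTE V0) /=.
by rewrite padic_val_frac // opprB ler_eXz2l //; lia.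
Qed.

Lemma padic_pow_lt (eps : rat) : 0 < eps -> exists L : nat, p%:R ^ (- L%:Z) < eps.
Proof.
move=> eps0; pose L := Num.Def.archi_bound eps^-1.
have eps_L : eps^-1 < L%:R by apply: archi_boundP; rewrite invr_ge0 ltW.
exists L; rewrite -exprnN invf_plt ?posrE ?exprn_gt0 ?ltr0n ?prime_gt0 //.
apply: (lt_le_trans eps_L); rewrite -natrX ler_nat.
exact: ltnW (ltn_expl L (prime_gt1 p_pr)).
Qed.

End PadicAbs.

Lemma sub_frac_cube (F a n d : int) : a != 0 -> d != 0 ->
  F%:~R / (a * d ^+ 3)%:~R - n%:~R / d%:~R =
  (F - a * n * d ^+ 2)%:~R / (a * d ^+ 3)%:~R :> rat.
Proof. by move=> a0 d0; rewrite intrB !intrM; field; rewrite !intr_eq0 a0 d0. Qed.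

Theorem theorem1p5 (p : nat) (a b c : int) :
  prime p -> p != 3%N -> ~~ ((p%:Z) %| a * b * c)%Z ->
  dense_in_Qp p (ratio_set (diag_cubic a b c)).
Proof.
move=> p_pr p_neq3 pabc q eps eps0.
have [L pL_lt] := padic_pow_lt p_pr eps0.
set d := denq q; set e := logn p `|d|.
have [pa pb pc] := ndvdz_mul3 p_pr pabc.
have [x [y [z fxyz]]] :=
  diag_cubic_approx p_pr p_neq3 (a * numq q * d ^+ 2) (3 * e + L) pa pb pc.
have a0 : a != 0 by apply: contraNneq pa => ->; rewrite dvdz0.
have D_eq : diag_cubic a b c d 0 0 = a * d ^+ 3 by rewrite /diag_cubic; ring.
have D0 : a * d ^+ 3 != 0 by rewrite mulf_neq0 ?expf_neq0 ?denq_neq0.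
exists ((diag_cubic a b c x y z)%:~R / (diag_cubic a b c d 0 0)%:~R); split.
  by exists x, y, z, d, 0, 0; rewrite D_eq.
rewrite D_eq -[X in _ - X]divq_num_den -/d sub_frac_cube ?denq_neq0 //.
have logn_D : logn p `|a * d ^+ 3| = (3 * e)%N.
  have d0 : d != 0 := denq_neq0 q.
  rewrite abszM abszX lognM ?expn_gt0 ?absz_gt0 ?a0 ?d0 // lognX.
  by rewrite logn_coprime // prime_coprime.
apply: le_lt_trans (padic_abs_frac_le p_pr D0 fxyz) _.
by rewrite logn_D; have -> : (3 * e)%N%:Z - (3 * e + L)%N%:Z = - L%:Z by lia.
Qed.
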